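(* Suppose $V$ is irreducible and $\bar p$ is the maximizer of $p\mapsto\min_{k}\mathrm{SIR}_k(p)/\gamma_k$ over $\mathcal P$. Then there is $\beta>0$ such that for every $n\in\mathcal N_0(\bar p)$ both $\beta\tilde p=A^{(n)}\tilde p$ with $\tilde p=(\bar p,1)\in\mathbb R_{++}^{K+1}$ and $\beta\bar p=B^{(n)}\bar p$ hold.
   Context: Network model: $K\ge 2$ links, $\mathcal K=\{1,\dots,K\}$. Power constraint set $\mathcal P=\{p\in\mathbb R_+^K: Cp\le\hat p\}$, where $C\in\{0,1\}^{N\times K}$ has at least one entry equal to $1$ in each column and $\hat p=(P_1,\dots,P_N)\in\mathbb R_{++}^N$; $\mathcal N=\{1,\dots,N\}$; $c_n\in\{0,1\}^K$ is the $n$-th row of $C$ (as a column vector) and $g_n(p)=c_n^Tp/P_n$. Gain matrix $V\in\mathbb R_+^{K\times K}$ with zero diagonal, noise vector $z\in\mathbb R_{++}^K$, $\mathrm{SIR}_k(p)=p_k/((Vp)_k+z_k)$. SIR targets $\gamma_k>0$, $\Gamma=\mathrm{diag}(\gamma_1,\dots,\gamma_K)$. For $n\in\mathcal N$: $B^{(n)}=\Gamma V+\frac1{P_n}\Gamma z c_n^T\in\mathbb R_+^{K\times K}$ and $A^{(n)}=\begin{pmatrix}\Gamma V&\Gamma z\\ \frac1{P_n}c_n^T\Gamma V&\frac1{P_n}c_n^T\Gamma z\end{pmatrix}\in\mathbb R_+^{(K+1)\times(K+1)}$. For $p\in\mathbb R_+^K$, $\mathcal N_0(p)=\{n\in\mathcal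 N: g_n(p)=\max_{m\in\mathcal N}g_m(p)=1\}$. *)

From HB Require Import structures.
From mathcomp Require Import all_boot all_order all_algebra.
Set Implicit Arguments. Unset Strict Implicit. Unset Printing Implicit Defensive.
Import Order.TTheory GRing.Theory Num.Theory.
Local Open Scope ring_scope.

Section Defs.
Variable R : realFieldType.

(* minimum of a function over 'I_K (default is one of the values, so this is
   the genuine minimum whenever K > 0). *)
Definition min_fin (K : nat) (f : 'I_K -> R) : R :=
  \big[Num.min/ head 0 (map f (enum 'I_K))]_k f k.

Definition irreducible_mx (K : nat) (V : 'M[R]_K) : Prop :=
  forall i j : 'I_K, exists m : nat, (0 < m)%N /\ 0 < (V ^+ m) i j.

Definition SIR (K : nat) (V : 'M[R]_K) (z p : 'cV[R]_K) (k : 'I_K) : R :=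
  p k 0 / ((V *m p) k 0 + z k 0).

Definition in_P (N K : nat) (C : 'M[R]_(N, K)) (phat : 'cV[R]_N) (p : 'cV[R]_K) : Prop :=
  (forall k, 0 <= p k 0) /\ (forall n, (C *m p) n 0 <= phat n 0).

Definition gfun (N K : nat) (C : 'M[R]_(N, K)) (phat : 'cV[R]_N) (n : 'I_N) (p : 'cV[R]_K) : R :=
  (row n C *m p) 0 0 / phat n 0.

Definition in_N0 (N K : nat) (C : 'M[R]_(N, K)) (phat : 'cV[R]_N) (p : 'cV[R]_K) (n : 'I_N) : Prop :=
  gfun C phat n p = \big[Num.max/ gfun C phat n p]_(m < N) gfun C phat m p
  /\ gfun C phat n p = 1.

Definition Gam (K : nat) (gamma : 'rV[R]_K) : 'M[R]_K := diag_mx gamma.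

Definition Bmx (N K : nat) (C : 'M[R]_(N, K)) (phat : 'cV[R]_N) (V : 'M[R]_K)
  (z : 'cV[R]_K) (gamma : 'rV[R]_K) (n : 'I_N) : 'M[R]_K :=
  Gam gamma *m V + (phat n 0)^-1 *: (Gam gamma *m z *m row n C).

Definition Amx (N K : nat) (C : 'M[R]_(N, K)) (phat : 'cV[R]_N) (V : 'M[R]_K)
  (z : 'cV[R]_K) (gamma : 'rV[R]_K) (n : 'I_N) : 'M[R]_(K + 1) :=
  block_mx (Gam gamma *m V) (Gam gamma *m z)
           ((phat n 0)^-1 *: (row n C *m Gam gamma *m V))
           ((phat n 0)^-1 *: (row n C *m Gam gamma *m z)).

Definition ext1 (K : nat) (p : 'cV[R]_K) : 'cV[R]_(K + 1) := col_mx p (const_mx 1).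

End Defs.

From HB Require Import structures.
From mathcomp Require Import all_boot all_order all_algebra.
Import Order.TTheory GRing.Theory Num.Theory.
Local Open Scope ring_scope.

(* Write D_k(p) = (Vp)_k + z_k and r_k(p) = SIR_k(p)/gamma_k = p_k/(gamma_k D_k(p)),
   and let opt = min_k r_k(pbar) be the optimal max-min value (opt > 0, as some
   feasible power vector has positive entries).  The heart of the proof is that
   at the optimum all ratios r_k(pbar) equal opt.  Call p "good" if it is
   feasible and min_k r_k(p) >= opt; its bottleneck set
   S(p) = {k | r_k(p) <= opt} is nonempty by optimality.  If S(p) is not
   everything, moving every p_k halfway down to opt gamma_k D_k(p) keeps p good, and since V is irreducible some
   bottleneck link k receives interference from a slack link j, whose power
   strictly drops; so k leaves the bottleneck set and S shrinks strictly.
   Induction on #|S(p)| thus forces S(pbar) to be the whole index set.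
   Balancing reads Gamma (V pbar + z) = opt^-1 pbar, and together with
   g_n(pbar) = 1 for n in N_0(pbar) this is exactly the eigen-equation for
   A^(n) and B^(n) with beta = opt^-1 (pure block-matrix algebra). *)

Lemma min_fin_le {R : realFieldType} {K : nat} (f : 'I_K -> R) (k : 'I_K) :
  min_fin f <= f k.
Proof.
rewrite /min_fin; elim: (index_enum _) (mem_index_enum k) => [|i s IH] //.
rewrite big_cons in_cons ge_min => /orP[/eqP <-|/IH ->]; last by rewrite orbT.
by rewrite lexx.
Qed.

Lemma min_fin_attained {R : realFieldType} {K : nat} (f : 'I_K -> R) :
  (0 < K)%N -> exists k, min_fin f = f k.
Proof.
move=> K_gt0; rewrite /min_fin.
apply: (big_ind (fun x => exists k, x = f k)) => [||i _]; last by exists i.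
- have: (0 < size (enum 'I_K))%N by rewrite size_enum_ord.
  by case: (enum 'I_K) => [|k s] // _; exists k.
- by move=> x y [i ->] [j ->]; rewrite minEle; case: ifP => _; [exists i|exists j].
Qed.

Lemma closed_set_mx_pow {R : pzRingType} {K : nat} {V : 'M[R]_K} {S : {set 'I_K}} :
  (forall k j, k \in S -> j \notin S -> V k j = 0) ->
  forall m k j, k \in S -> j \notin S -> (V ^+ m) k j = 0.
Proof.
move=> closedS; elim=> [|m IH] k j kS jS.
  by rewrite expr0 mxE; case: eqP => // k_j; move: jS; rewrite -k_j kS.
rewrite exprS -mulmxE mxE big1 // => l _.
by case: (boolP (l \in S)) => lS; [rewrite IH ?mulr0 | rewrite closedS ?mul0r].
Qed.

Lemma irreducible_edge_out {R : realFieldType} {K : nat} (V : 'M[R]_K)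
    (S : {set 'I_K}) :
  irreducible_mx V -> (exists k, k \in S) -> (exists j, j \notin S) ->
  exists k j, [/\ k \in S, j \notin S & V k j != 0].
Proof.
move=> irrV [k0 k0S] [j0 j0S].
have [/existsP[k /existsP[j /and3P[kS jS Vkj]]]|/existsPn noedge] :=
  boolP [exists k, exists j, [&& k \in S, j \notin S & V k j != 0]].
  by exists k, j.
have closedS k j : k \in S -> j \notin S -> V k j = 0.
  by move=> kS jS; apply/eqP; move/existsPn/(_ j): (noedge k); rewrite kS jS negbK.
have [m [_ Vm_pos]] := irrV k0 j0.
by rewrite (closed_set_mx_pow closedS) ?ltxx in Vm_pos.
Qed.

Section MaxMinSIR.
Context {R : realFieldType} {K N : nat} {C : 'M[R]_(N, K)} {phat : 'cV[R]_N}.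
Context {V : 'M[R]_K} {z : 'cV[R]_K} {gamma : 'rV[R]_K}.
Hypothesis C01 : forall n k, C n k = 0 \/ C n k = 1.
Hypothesis phat_gt0 : forall n, 0 < phat n 0.
Hypothesis V_ge0 : forall i j, 0 <= V i j.
Hypothesis z_gt0 : forall k, 0 < z k 0.
Hypothesis gamma_gt0 : forall k, 0 < gamma 0 k.

Definition intf (p : 'cV[R]_K) (k : 'I_K) : R := (V *m p) k 0 + z k 0.
Definition ratio (p : 'cV[R]_K) (k : 'I_K) : R := SIR V z p k / gamma 0 k.

Definition nonneg (p : 'cV[R]_K) : Prop := forall k, 0 <= p k 0.

Lemma intf_gt0 (p : 'cV[R]_K) (k : 'I_K) : nonneg p -> 0 < intf p k * gamma 0 k.
Proof.
move=> p_ge0; rewrite mulr_gt0 // /intf mxE ltr_wpDl //.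
by apply: sumr_ge0 => j _; apply: mulr_ge0.
Qed.

Lemma ratioE (p : 'cV[R]_K) (k : 'I_K) : ratio p k = p k 0 / (intf p k * gamma 0 k).
Proof. by rewrite /ratio /SIR invfM mulrA. Qed.

Lemma ratio_ge (p : 'cV[R]_K) (k : 'I_K) (a : R) : nonneg p ->
  (a <= ratio p k) = (a * (intf p k * gamma 0 k) <= p k 0).
Proof. by move=> p_ge0; rewrite ratioE ler_pdivlMr ?intf_gt0. Qed.

Lemma ratio_gt (p : 'cV[R]_K) (k : 'I_K) (a : R) : nonneg p ->
  (a < ratio p k) = (a * (intf p k * gamma 0 k) < p k 0).
Proof. by move=> p_ge0; rewrite ratioE ltr_pdivlMr ?intf_gt0. Qed.

Lemma intf_le (p q : 'cV[R]_K) (k : 'I_K) :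
  (forall j, q j 0 <= p j 0) -> intf q k <= intf p k.
Proof.
move=> q_le_p; rewrite /intf lerD2r !mxE; apply: ler_sum => j _.
exact: ler_wpM2l.
Qed.

Lemma intf_lt {p q : 'cV[R]_K} {k j : 'I_K} :
  (forall i, q i 0 <= p i 0) -> V k j != 0 -> q j 0 < p j 0 -> intf q k < intf p k.
Proof.
move=> q_le_p Vkj qj_lt; rewrite /intf ltrD2r !mxE (bigD1 j) //= [X in _ < X](bigD1 j) //=.
apply: ltr_leD; first by rewrite ltr_pM2l // lt_neqAle eq_sym Vkj V_ge0.
by apply: ler_sum => i _; apply: ler_wpM2l.
Qed.

Lemma in_P_down (p q : 'cV[R]_K) : in_P C phat p -> nonneg q ->
  (forall k, q k 0 <= p k 0) -> in_P C phat q.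
Proof.
move=> [_ Cp_le] q_ge0 q_le_p; split=> // n; apply: le_trans (Cp_le n).
rewrite !mxE; apply: ler_sum => k _; apply: ler_wpM2l => //.
by case: (C01 n k) => ->; rewrite ?lexx ?ler01.
Qed.

(* A small enough uniform power vector is feasible. *)
Lemma feasible_positive : (0 < K)%N -> exists2 p, in_P C phat p & forall k, 0 < p k 0.
Proof.
move=> K_gt0; pose s := \sum_n (phat n 0)^-1.
have s_ge0 : 0 <= s by apply: sumr_ge0 => n _; rewrite invr_ge0 ltW.
pose eps := (K%:R * (1 + s))^-1.
have eps_gt0 : 0 < eps by rewrite invr_gt0 mulr_gt0 ?ltr0n ?ltr_pwDl.
exists (const_mx eps) => [|k]; last by rewrite mxE.
split=> [k|n]; first by rewrite mxE ltW.
rewrite mxE (@le_trans _ _ (\sum_(k < K) eps)) //.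
  apply: ler_sum => k _; rewrite mxE.
  by case: (C01 n k) => ->; rewrite ?mul0r ?mul1r ?lexx ?ltW.
rewrite sumr_const card_ord -mulr_natl /eps invfM mulrA divff ?mul1r ?pnatr_eq0 -?lt0n //.
rewrite -[phat n 0]invrK lef_pV2 ?posrE ?invr_gt0 ?ltr_pwDl //.
rewrite /s (bigD1 n) //= addrCA lerDl addr_ge0 // sumr_ge0 // => i _.
by rewrite invr_ge0 ltW.
Qed.

Context {pbar : 'cV[R]_K}.
Hypothesis K_gt0 : (0 < K)%N.
Hypothesis pbar_feasible : in_P C phat pbar.
Hypothesis pbar_opt :
  forall p, in_P C phat p -> min_fin (ratio p) <= min_fin (ratio pbar).

Definition opt : R := min_fin (ratio pbar).

Lemma opt_gt0 : 0 < opt.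
Proof.
have [p p_feas p_gt0] := feasible_positive K_gt0.
have [k mink] := min_fin_attained (ratio p) K_gt0.
apply: lt_le_trans (pbar_opt _ p_feas); rewrite mink ratio_gt ?mul0r //.
by move=> j; apply: ltW.
Qed.

Definition good (p : 'cV[R]_K) : Prop := in_P C phat p /\ forall k, opt <= ratio p k.
Definition bottleneck (p : 'cV[R]_K) : {set 'I_K} := [set k | ratio p k <= opt].

Lemma bottleneck_nonempty {p : 'cV[R]_K} : good p -> exists k, k \in bottleneck p.
Proof.
move=> [p_feas _]; have [k mink] := min_fin_attained (ratio p) K_gt0.
by exists k; rewrite inE -mink pbar_opt.
Qed.

(* Descent step: lowering every power halfway towards its balancing level
   opt * gamma_k D_k(p) strictly shrinks a proper bottleneck set. *)
Lemma bottleneck_shrink {p : 'cV[R]_K} : irreducible_mx V -> good p ->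
  bottleneck p != setT -> exists2 q, good q & bottleneck q \proper bottleneck p.
Proof.
move=> irrV [p_feas p_ge] slack.
have p_ge0 : nonneg p := p_feas.1.
pose lvl k := opt * (intf p k * gamma 0 k).
have lvl_le k : lvl k <= p k 0 by rewrite -ratio_ge // p_ge.
pose q : 'cV[R]_K := \col_k ((lvl k + p k 0) / 2).
have qE k : q k 0 = (lvl k + p k 0) / 2 by rewrite mxE.
have q_le_p k : q k 0 <= p k 0 by rewrite qE (midf_le (lvl_le k)).2.
have lvl_le_q k : lvl k <= q k 0 by rewrite qE (midf_le (lvl_le k)).1.
have q_ge0 : nonneg q.
  by move=> k; apply: le_trans (lvl_le_q k); rewrite mulr_ge0 ?ltW ?opt_gt0 ?intf_gt0.
have lvl_q k : opt * (intf q k * gamma 0 k) <= lvl k.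
  by rewrite ler_pM2l ?opt_gt0 // ler_pM2r ?intf_le.
have slack_stays k : opt < ratio p k -> opt < ratio q k.
  rewrite !ratio_gt // qE => /midf_lt[lt_q _]; exact: le_lt_trans (lvl_q k) lt_q.
have [k [j [kS jS Vkj]]] : exists k j,
    [/\ k \in bottleneck p, j \notin bottleneck p & V k j != 0].
  apply: irreducible_edge_out => //; first exact: bottleneck_nonempty.
  by move: slack; rewrite eqEsubset subsetT /= => /subsetPn[j _ jS]; exists j.
have qj_lt : q j 0 < p j 0.
  by move: jS; rewrite inE -ltNge ratio_gt // qE => /midf_lt[].
exists q; first split.
- exact: in_P_down p_feas q_ge0 q_le_p.
- by move=> i; rewrite ratio_ge // (le_trans (lvl_q i) (lvl_le_q i)).
- apply/properP; split.
    by apply/subsetP => i; rewrite !inE; apply: contraTT; rewrite -!ltNge; apply: slack_stays.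
  exists k => //; rewrite inE -ltNge ratio_gt //; apply: lt_le_trans (lvl_le_q k).
  by rewrite ltr_pM2l ?opt_gt0 // ltr_pM2r ?(intf_lt q_le_p Vkj).
Qed.

Lemma ratio_balanced : irreducible_mx V -> forall k, ratio pbar k = opt.
Proof.
move=> irrV.
have all_bottleneck n p : (#|bottleneck p| <= n)%N -> good p -> bottleneck p = setT.
  elim: n p => [|n IH] p card_le p_good.
    have [k kS] := bottleneck_nonempty p_good.
    by move: card_le; rewrite leqn0 cards_eq0 => /eqP S0; rewrite S0 inE in kS.
  apply/eqP; apply: contraT => slack.
  have [q q_good /[dup] q_proper /proper_card lt_card] := bottleneck_shrink irrV p_good slack.
  have q_full : bottleneck q = setT.
    by apply: IH q_good; rewrite -ltnS (leq_trans lt_card).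
  by rewrite q_full properE subsetT andbF in q_proper.
have pbar_good : good pbar by split=> // k; apply: min_fin_le.
move=> k; apply/eqP; rewrite eq_le min_fin_le andbT.
have : k \in bottleneck pbar by rewrite (all_bottleneck _ _ (leqnn _) pbar_good) inE.
by rewrite inE.
Qed.

Lemma optimum_fixed_point : irreducible_mx V ->
  exists2 beta, 0 < beta & Gam gamma *m (V *m pbar + z) = beta *: pbar.
Proof.
move=> irrV; exists opt^-1; first by rewrite invr_gt0 opt_gt0.
apply/matrixP => k j; rewrite (ord1 j) /Gam mul_diag_mx !mxE.
have pbar_ge0 : nonneg pbar := pbar_feasible.1.
have balanced : pbar k 0 = opt * (intf pbar k * gamma 0 k).
  by rewrite -(ratio_balanced irrV k) ratioE divfK ?gt_eqF ?intf_gt0.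
by rewrite balanced mulKf ?gt_eqF ?opt_gt0 // /intf mxE mulrC.
Qed.

Lemma optimum_positive : irreducible_mx V -> forall k, 0 < pbar k 0.
Proof.
move=> irrV k; have := opt_gt0; rewrite -(ratio_balanced irrV k) ratio_gt ?mul0r //.
exact: pbar_feasible.1.
Qed.

End MaxMinSIR.

Lemma mulmx_const1 {R : pzSemiRingType} {m : nat} (X : 'M[R]_(m, 1)) :
  X *m const_mx 1 = X.
Proof. by apply/matrixP => i j; rewrite !ord1 !mxE big_ord1 mxE mulr1. Qed.

Section EigenEquations.
Context {R : realFieldType} {K N : nat} {C : 'M[R]_(N, K)} {phat : 'cV[R]_N}.
Context {V : 'M[R]_K} {z : 'cV[R]_K} {gamma : 'rV[R]_K}.
Context {p : 'cV[R]_K} {beta : R} {n : 'I_N}.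
Hypothesis fixed_point : Gam gamma *m (V *m p + z) = beta *: p.
Hypothesis active : gfun C phat n p = 1.

Lemma active_row : (phat n 0)^-1 *: (row n C *m p) = const_mx 1.
Proof. by apply/matrixP => i j; rewrite !ord1 mxE [RHS]mxE mulrC; apply: active. Qed.

Lemma Bmx_eigen : beta *: p = Bmx C phat V z gamma n *m p.
Proof.
rewrite /Bmx mulmxDl -scalemxAl -[_ *m row n C *m p]mulmxA scalemxAr active_row.
by rewrite mulmx_const1 -mulmxA -mulmxDr fixed_point.
Qed.

Lemma Amx_eigen : beta *: ext1 p = Amx C phat V z gamma n *m ext1 p.
Proof.
have fixed_point' : Gam gamma *m (V *m p) + Gam gamma *m z = beta *: p.
  by rewrite -mulmxDr fixed_point.
rewrite /ext1 /Amx mul_block_col scale_col_mx !mulmx_const1 -mulmxA fixed_point'.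
congr col_mx; rewrite -!scalemxAl -scalerDr -!mulmxA -mulmxDr fixed_point'.
by rewrite -scalemxAr scalerA mulrC -scalerA active_row.
Qed.

End EigenEquations.

Theorem lemma3 (R : realFieldType) (K N : nat)
  (C : 'M[R]_(N, K)) (phat : 'cV[R]_N) (V : 'M[R]_K) (z : 'cV[R]_K)
  (gamma : 'rV[R]_K) (pbar : 'cV[R]_K) :
  (2 <= K)%N ->
  (forall n k, C n k = 0 \/ C n k = 1) ->
  (forall k, exists n, C n k = 1) ->
  (forall n, 0 < phat n 0) ->
  (forall i j, 0 <= V i j) ->
  (forall i, V i i = 0) ->
  (forall k, 0 < z k 0) ->
  (forall k, 0 < gamma 0 k) ->
  irreducible_mx V ->
  in_P C phat pbar ->
  (forall p, in_P C phat p ->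
     min_fin (fun k => SIR V z p k / gamma 0 k)
       <= min_fin (fun k => SIR V z pbar k / gamma 0 k)) ->
  (forall k, 0 < pbar k 0) /\
  exists beta : R, 0 < beta /\
    forall n, in_N0 C phat pbar n ->
      beta *: ext1 pbar = Amx C phat V z gamma n *m ext1 pbar /\
      beta *: pbar = Bmx C phat V z gamma n *m pbar.
Proof.
move=> K_ge2 C01 _ phat_gt0 V_ge0 _ z_gt0 gamma_gt0 irrV pbar_feas pbar_opt.
have K_gt0 : (0 < K)%N by apply: leq_trans K_ge2.
split; first exact: (optimum_positive C01 phat_gt0 V_ge0 z_gt0 gamma_gt0 K_gt0
  pbar_feas pbar_opt irrV).
have [beta beta_gt0 fixed] := optimum_fixed_point C01 phat_gt0 V_ge0 z_gt0
  gamma_gt0 K_gt0 pbar_feas pbar_opt irrV.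
exists beta; split=> // n [_ active].
by split; [apply: Amx_eigen fixed active | apply: Bmx_eigen fixed active].
Qed.
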